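(* Let $G$ be a connected graph of order at least three. If $G$ has an independent $\gamma$-set that contains no leaf of $G$, then $\gamma(G)=\gamma_{\rm cer}(G)$.
   Context: All graphs are finite and simple. A set $D\subseteq V_G$ is a dominating set of $G$ if every vertex of $V_G-D$ has a neighbor in $D$; $\gamma(G)$ is the minimum cardinality of a dominating set, and a $\gamma$-set is a dominating set of cardinality $\gamma(G)$. A set $D\subseteq V_G$ is a certified dominating set of $G$ if $D$ is a dominating set of $G$ and every vertex of $D$ has either zero or at least two neighbors in $V_G-D$; $\gamma_{\rm cer}(G)$ is the minimum cardinality of a certified dominating set of $G$. A leaf is a vertex of degree one. *)

From mathcomp Require Import all_boot.
Set Implicit Arguments. Unset Strict Implicit. Unset Printing Implicit Defensive.

Definition simple_graph (T : finType) (e : rel T) : Prop :=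
  symmetric e /\ irreflexive e.

Definition connected_graph (T : finType) (e : rel T) : Prop :=
  forall x y : T, connect e x y.

Definition nbhd (T : finType) (e : rel T) (v : T) : {set T} := [set u | e v u].

Definition is_leaf (T : finType) (e : rel T) (v : T) : bool :=
  #|nbhd e v| == 1.

Definition dominating (T : finType) (e : rel T) (D : {set T}) : bool :=
  [forall v, (v \notin D) ==> [exists u in D, e v u]].

Definition independent (T : finType) (e : rel T) (D : {set T}) : bool :=
  [forall u in D, forall v in D, ~~ e u v].

Definition certified (T : finType) (e : rel T) (D : {set T}) : bool :=
  dominating e D &&
  [forall v in D, (#|nbhd e v :\: D| == 0) || (2 <= #|nbhd e v :\: D|)].

(* minimum cardinality of a dominating set ([set: T] is always dominating,
   so #|T| is a valid upper default) *)
Definition gamma (T : finType) (e : rel T) : nat :=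
  \big[minn/#|T|]_(D : {set T} | dominating e D) #|D|.

Definition gamma_cer (T : finType) (e : rel T) : nat :=
  \big[minn/#|T|]_(D : {set T} | certified e D) #|D|.

Definition gamma_set (T : finType) (e : rel T) (D : {set T}) : bool :=
  dominating e D && (#|D| == gamma e).

From mathcomp Require Import all_boot.

(* An independent gamma-set D is certified as soon as it contains no leaf:
   by independence every neighbour of v in D lies outside D, so v has either
   no or at least two neighbours outside D.  Hence gamma_cer <= |D| = gamma,
   while gamma <= gamma_cer because certified sets are dominating. *)

Lemma bigminn_seq_le (I : eqType) (r : seq I) (P : pred I) (F : I -> nat)
    (x0 : nat) (i : I) :
  i \in r -> P i -> \big[minn/x0]_(j <- r | P j) F j <= F i.
Proof.
move=> + Pi; elim: r => // j r IHr; rewrite inE big_cons.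
case/orP=> [/eqP <-|/IHr le_ri]; first by rewrite Pi geq_minl.
by case: (P j); rewrite // geq_min le_ri orbT.
Qed.

Lemma bigminn_le (I : finType) (P : pred I) (F : I -> nat) (x0 : nat) (i : I) :
  P i -> \big[minn/x0]_(j | P j) F j <= F i.
Proof. exact/bigminn_seq_le/mem_index_enum. Qed.

Section Domination.

Variables (T : finType) (e : rel T).

Lemma dominatingT : dominating e [set: T].
Proof. by apply/forallP => v; rewrite in_setT. Qed.

Lemma certified_dominating (D : {set T}) : certified e D -> dominating e D.
Proof. by case/andP. Qed.

Lemma gamma_le (D : {set T}) : dominating e D -> gamma e <= #|D|.
Proof. exact: bigminn_le. Qed.

Lemma gamma_cer_le (D : {set T}) : certified e D -> gamma_cer e <= #|D|.
Proof. exact: bigminn_le. Qed.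

Lemma gamma_le_gamma_cer : gamma e <= gamma_cer e.
Proof.
apply: (big_ind (fun n => gamma e <= n)).
- by rewrite -cardsT gamma_le ?dominatingT.
- by move=> m n le_m le_n; rewrite leq_min le_m le_n.
- by move=> D /certified_dominating /gamma_le.
Qed.

Lemma independent_nbhdD (D : {set T}) (v : T) :
  independent e D -> v \in D -> nbhd e v :\: D = nbhd e v.
Proof.
move=> /forall_inP indD vD; apply/setP => u; rewrite !inE.
case uD: (u \in D) => //=.
by move/forall_inP: (indD v vD) => /(_ u uD) /negbTE ->.
Qed.

Lemma certified_independent (D : {set T}) :
  dominating e D -> independent e D -> (forall v, v \in D -> ~~ is_leaf e v) ->
  certified e D.
Proof.
move=> domD indD noleafD; rewrite /certified domD /=.
apply/forall_inP => v vD; rewrite independent_nbhdD //.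
by move: (noleafD v vD); rewrite /is_leaf; case: #|nbhd e v| => [|[|n]].
Qed.

End Domination.

Theorem corollary2p2 (T : finType) (e : rel T) :
  simple_graph e -> connected_graph e -> 2 < #|T| ->
  (exists D : {set T},
      [/\ gamma_set e D, independent e D & forall v, v \in D -> ~~ is_leaf e v]) ->
  gamma e = gamma_cer e.
Proof.
move=> _ _ _ [D [/andP[domD /eqP cardD] indD noleafD]].
apply/eqP; rewrite eqn_leq gamma_le_gamma_cer -cardD.
exact/gamma_cer_le/certified_independent.
Qed.
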